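(* Let $\mathcal{F}$ be a non-trivial minor-closed class of multigraphs and let $d_{\mathcal{F}}$ be a number such that every multigraph $H\in\mathcal{F}$ satisfies $|E(H)|\le \mu(H)\cdot d_{\mathcal{F}}\cdot |V(H)|$. Let $m$ be a positive integer and $G$ a multigraph with $\mu(G)\le m$ and $\delta(G)\ge 3m\cdot d_{\mathcal{F}}$. Then for every $X\subseteq V(G)$ with $G-X\in\mathcal{F}$, \[|E(G)|\;\le\;2\sum_{v\in X}\mathrm{edeg}_G(v)\;\le\;4|E(G)|.\]
   Context: Graphs are finite multigraphs without loops, edges counted with multiplicity. $\mu(H)$ is the maximum multiplicity of an edge of $H$. $\mathrm{edeg}_G(v)$ is the edge-degree of $v$, i.e., the number of edges of $G$ incident to $v$; $\delta(G)$ is the minimum edge-degree of $G$. A class is minor-closed if it is closed under taking minors, and non-trivial if it neither contains all graphs nor is empty. *)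

From HB Require Import structures.
From mathcomp Require Import all_boot all_order all_algebra.
Set Implicit Arguments. Unset Strict Implicit. Unset Printing Implicit Defensive.

(* A finite loopless multigraph on the vertex type V: mult u v is the
   number of edges between u and v. *)
Record mgraph (V : finType) := MGraph {
  mult : V -> V -> nat;
  mult_sym : forall u v, mult u v = mult v u;
  mult_irr : forall v, mult v v = 0 }.

(* number of edges, counted with multiplicity (each unordered pair once) *)
Definition nedges (V : finType) (G : mgraph V) : nat :=
  \sum_(u : V) \sum_(v : V | (enum_rank u < enum_rank v)%N) mult G u v.

Definition edeg (V : finType) (G : mgraph V) (v : V) : nat :=
  \sum_(u : V) mult G v u.

Definition mu (V : finType) (G : mgraph V) : nat :=
  \max_(u : V) \max_(v : V) mult G u v.

Definition induced (V : finType) (G : mgraph V) (S : {set V})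
  : mgraph {v : V | v \in S}.
Proof.
refine (@MGraph _ (fun u v => mult G (val u) (val v)) _ _).
- by move=> u v; rewrite mult_sym.
- by move=> v; rewrite mult_irr.
Defined.

Definition delv (V : finType) (G : mgraph V) (X : {set V}) := induced G (~: X).

(* H is a minor of G: there is a model of H in G, i.e. pairwise disjoint,
   nonempty, connected branch sets phi^-1(h) (h vertex of H), such that the
   multiplicity of hh' in H is at most the number of edges of G between the
   branch sets of h and h'. (Standard characterization of minors of
   multigraphs, where contraction keeps parallel edges and deletes loops.) *)
Definition minor (W V : finType) (H : mgraph W) (G : mgraph V) : Prop :=
  exists phi : V -> option W,
    [/\ forall h : W, exists v : V, phi v = Some h,
        forall (h : W) (u v : V), phi u = Some h -> phi v = Some h ->
          connect [rel x y | [&& phi x == Some h, phi y == Some h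
                              & (0 < mult G x y)%N]] u v
      & forall h h' : W, h != h' ->
          (mult H h h' <= \sum_(u : V | phi u == Some h)
                            \sum_(v : V | phi v == Some h') mult G u v)%N].

Definition graph_class := forall V : finType, mgraph V -> Prop.

Definition minor_closed (F : graph_class) : Prop :=
  forall (V W : finType) (G : mgraph V) (H : mgraph W),
    F V G -> minor H G -> F W H.

Definition nontrivial_class (F : graph_class) : Prop :=
  (exists (V : finType) (G : mgraph V), F V G) /\
  (exists (V : finType) (G : mgraph V), ~ F V G).

From HB Require Import structures.
From mathcomp Require Import all_boot all_order all_algebra.
From mathcomp Require Import zify lra.
Import Order.TTheory GRing.Theory Num.Theory.

Set Implicit Arguments.
Unset Strict Implicit.
Unset Printing Implicit Defensive.

(* Write Y for the complement of X, H = G - X, and e(A, B) for the number of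
   edges from A to B, each edge inside A counted twice when A = B.  Then
   2 sum_X edeg = 2 e(X,X) + 2 e(X,Y) and 2|E(G)| = e(X,X) + 2 e(X,Y) + 2|E(H)|,
   so the upper bound is trivial and the lower bound reduces to
   |E(H)| <= e(X,Y).  Summing the degree bound over Y gives
   3 m d |Y| <= 2|E(H)| + e(X,Y), while H lies in F, so
   |E(H)| <= mu(H) d |Y| <= m d |Y| when d >= 0 (and |E(H)| = 0 otherwise). *)

Lemma sum_edeg (V : finType) (G : mgraph V) : \sum_v edeg G v = 2 * nedges G.
Proof.
have split_row u : edeg G u = \sum_(v | enum_rank u < enum_rank v) mult G u v
                            + \sum_(v | enum_rank v < enum_rank u) mult G v u.
  rewrite /edeg (bigID (fun v => enum_rank u < enum_rank v)) /=; congr (_ + _).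
  rewrite (bigID (fun v => enum_rank v < enum_rank u)) /= [X in _ + X]big1 ?addn0.
    apply: eq_big => v; last by rewrite mult_sym.
    by rewrite ltnNge leq_eqVlt negb_or andbC; case: ltngtP.
  move=> v; rewrite -!leqNgt => /andP[uv vu].
  have /enum_rank_inj -> : enum_rank u = enum_rank v by apply/val_inj/anti_leq/andP.
  by rewrite mult_irr.
rewrite (eq_bigr _ (fun u _ => split_row u)) big_split /=.
by rewrite [X in _ + X](exchange_big_dep xpredT) //= addnn mul2n.
Qed.

Lemma sum_setC {V : finType} (A : {set V}) (f : V -> nat) :
  \sum_v f v = \sum_(v in A) f v + \sum_(v in ~: A) f v.
Proof.
rewrite (bigID (mem A)) /=; congr (_ + _).
by apply: eq_bigl => v; rewrite in_setC.
Qed.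

Section MultBetween.

Variables (V : finType) (G : mgraph V).

Definition mult_between (A B : {set V}) : nat :=
  \sum_(u in A) \sum_(v in B) mult G u v.

Lemma mult_betweenC (A B : {set V}) : mult_between A B = mult_between B A.
Proof.
rewrite /mult_between exchange_big /=.
by apply: eq_bigr => u _; apply: eq_bigr => v _; rewrite mult_sym.
Qed.

Lemma sum_edeg_set (A : {set V}) :
  \sum_(v in A) edeg G v = mult_between A A + mult_between A (~: A).
Proof. by rewrite -big_split; apply: eq_bigr => u _; rewrite /edeg (sum_setC A). Qed.

Lemma sum_edeg_setC (A : {set V}) :
  2 * nedges G = \sum_(v in A) edeg G v + \sum_(v in ~: A) edeg G v.
Proof. by rewrite -sum_edeg (sum_setC A). Qed.

Lemma sum_edeg_set_le (A : {set V}) : \sum_(v in A) edeg G v <= 2 * nedges G.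
Proof. by rewrite (sum_edeg_setC A) leq_addr. Qed.

Lemma nedges_induced (S : {set V}) : 2 * nedges (induced G S) = mult_between S S.
Proof.
rewrite -sum_edeg /mult_between [RHS](big_sub S); apply: eq_bigr => u _.
by rewrite [RHS](big_sub S).
Qed.

Lemma mu_induced (S : {set V}) : mu (induced G S) <= mu G.
Proof.
apply/bigmax_leqP => u _; apply/bigmax_leqP => v _.
exact: leq_trans (leq_bigmax (F := mult G (val u)) (val v)) (leq_bigmax (val u)).
Qed.

Lemma card_delv (X : {set V}) : #|{: {v : V | v \in ~: X}}| = #|~: X|.
Proof. by rewrite card_sig; apply: eq_card. Qed.

Lemma nedges_le_sum_edeg (X : {set V}) :
  nedges (delv G X) <= mult_between X (~: X) ->
  nedges G <= 2 * \sum_(v in X) edeg G v.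
Proof.
move=> sparse; rewrite -(leq_pmul2l (isT : 0 < 2)) (sum_edeg_setC X).
rewrite !sum_edeg_set -(nedges_induced (~: X)) setCK (mult_betweenC (~: X)).
rewrite -/(delv G X); lia.
Qed.

End MultBetween.

Local Open Scope ring_scope.

Lemma cross_edges_ge (R : realFieldType) (d : R) (m mu k inner cross : nat) :
  (mu <= m)%N -> inner%:R <= mu%:R * d * k%:R ->
  (k * (3 * m))%:R * d <= (2 * inner + cross)%:R -> (inner <= cross)%N.
Proof.
move=> le_mu_m inner_le deg_ge; rewrite -(ler_nat R).
have [d_ge0 | d_lt0] := lerP 0 d.
  have mu_bound : mu%:R * d * k%:R <= m%:R * d * k%:R.
    by rewrite ler_wpM2r ?ler_wpM2r ?ler_nat.
  move: deg_ge; rewrite natrD !natrM; lra.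
have bound_le0 : mu%:R * d * k%:R <= 0 :> R.
  by rewrite mulrAC; apply: mulr_ge0_le0; [exact: mulr_ge0 | exact: ltW].
have cross_ge0 : 0 <= cross%:R :> R by [].
lra.
Qed.

Theorem lemma7 (R : realFieldType) (F : graph_class) (d : R)
  (Fmc : minor_closed F) (Fnt : nontrivial_class F)
  (Fd : forall (W : finType) (H : mgraph W), F W H ->
          (nedges H)%:R <= (mu H)%:R * d * #|W|%:R)
  (m : nat) (hm : (0 < m)%N)
  (V : finType) (G : mgraph V) (hmu : (mu G <= m)%N)
  (hdeg : forall v : V, (3 * m)%:R * d <= (edeg G v)%:R)
  (X : {set V}) (hX : F _ (delv G X)) :
  (nedges G <= 2 * \sum_(v in X) edeg G v <= 4 * nedges G)%N.
Proof.
apply/andP; split; last by rewrite -[4%N]/(2 * 2)%N -mulnA leq_pmul2l ?sum_edeg_set_le.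
have sparse_H := Fd _ _ hX; rewrite card_delv in sparse_H.
have deg_sum : (#|~: X| * (3 * m))%:R * d <= (\sum_(v in ~: X) edeg G v)%:R.
  by rewrite natr_sum natrM -mulrA mulr_natl -sumr_const; apply: ler_sum.
rewrite sum_edeg_set setCK (mult_betweenC G (~: X) X) -nedges_induced in deg_sum.
apply: nedges_le_sum_edeg.
exact: cross_edges_ge (leq_trans (mu_induced G (~: X)) hmu) sparse_H deg_sum.
Qed.
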